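(* Let $\delta\le0.011$ and let $\mathcal{I}$ be a $\delta$-ONI instance with $n$ agents and $|N^1_1|\le n\left(\frac14-\delta\right)/\left(\frac14+\frac\delta3\right)$. Then every agent $i\in N^2$ receives a bag of value at least $\frac34+\delta$ at the end of Algorithm $\mathtt{approxMMS1}(\mathcal{I},\delta)$.
   Context: Instance: agents $[n]$, goods $[m]$, additive valuations; goods with index larger than $m$ are dummy goods of value 0. Ordered: $v_i(1)\ge\dots\ge v_i(m)$ for all $i$. Normalized: every agent $i$ has a partition of the goods into $n$ bundles each of value exactly 1 to $i$. $\alpha$-irreducible: for every $i$, $v_i(1)<\alpha$, $v_i(\{2n-1,2n,2n+1\})<\alpha$, $v_i(\{3n-2,\dots,3n+1\})<\alpha$, $v_i(\{1,2n+1\})<\alpha$. $\delta$-ONI: ordered, normalized, $(3/4+\delta)$-irreducible. $B_k=\{k,2n-k+1\}$ ($k\in[n]$); $N^1=\{i:v_i(B_k)\le1\ \forall k\}$; $N^2=[n]\setminus N^1$; $N^1_1=\{i\in N^1:v_i(2n+1)\ge\frac14-5\delta\}$. Algorithm $\mathtt{approxMMS1}(\mathcal{I},\delta)$: $\alpha=3/4+\delta$, bags $B_1,\dots,B_n$. Phase 1: while some unassigned agent $i$ and unassigned bag $B$ have $v_i(B)\ge\alpha$, assign such $B$ to an agent valuing it at least $\alpha$, choosing an agent of $N^1_1$ whenever one qualifies. Phase 2: process remaining bags one by one; for the current bag $B$, while no unassigned agent values it at least $\alpha$, add an arbitrary unused good with index $>2n$; then assign $B$ to an unassigned agent valuing it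 at least $\alpha$, preferring $N^1_1$. (If a good must be added but none is left, the algorithm stops.) *)

From HB Require Import structures.
From mathcomp Require Import all_boot all_order all_algebra.
Set Implicit Arguments. Unset Strict Implicit. Unset Printing Implicit Defensive.
Import Order.TTheory GRing.Theory Num.Theory.
Local Open Scope ring_scope.

(* Agents are 'I_n (agent i : 'I_n is agent i+1 of the paper).
   Goods are positive naturals 1..m; v i j for j > m is a dummy good (value 0).
   Bags are indexed by 'I_n: bag k : 'I_n is the paper's B_{k+1}. *)

Section ApproxMMS1.
Context {R : realFieldType} (n m : nat) (v : 'I_n -> nat -> R) (delta : R).

Definition alpha : R := 3/4 + delta.

Definition bval (i : 'I_n) (s : seq nat) : R := \sum_(j <- s) v i j.

Definition valuations_ok : Prop :=
  (forall i j, 0 <= v i j) /\ (forall i j, (m < j)%N -> v i j = 0).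

Definition ordered : Prop :=
  forall i j, (1 <= j < m)%N -> v i j.+1 <= v i j.

Definition normalized : Prop :=
  forall i, exists f : nat -> 'I_n,
    forall k : 'I_n, \sum_(1 <= j < m.+1 | f j == k) v i j = 1.

Definition irreducible (a : R) : Prop :=
  forall i,
    [/\ v i 1 < a,
        bval i [:: (2 * n).-1; (2 * n)%N; (2 * n).+1] < a,
        bval i [:: (3 * n - 2)%N; (3 * n).-1; (3 * n)%N; (3 * n).+1] < a
      & bval i [:: 1%N; (2 * n).+1] < a].

Definition ONI : Prop := [/\ ordered, normalized & irreducible alpha].

Definition bagB (k : 'I_n) : seq nat := [:: k.+1; (2 * n - k)%N].

Definition inN1 (i : 'I_n) : bool := [forall k : 'I_n, bval i (bagB k) <= 1].
Definition inN11 (i : 'I_n) : bool :=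
  inN1 i && (1/4 - 5 * delta <= v i (2 * n).+1).
Definition N1 : {set 'I_n} := [set i | inN1 i].
Definition N11 : {set 'I_n} := [set i | inN11 i].
Definition N2 : {set 'I_n} := [set i | ~~ inN1 i].

Record state := St {
  bags : 'I_n -> seq nat;
  owner : 'I_n -> option 'I_n;
  phase2 : bool;
  cur : option 'I_n
}.

Definition init : state := St bagB (fun _ => None) false None.

Definition agent_free (s : state) (i : 'I_n) : bool :=
  [forall k, owner s k != Some i].
Definition bag_free (s : state) (k : 'I_n) : bool := owner s k == None.
Definition qualifies (s : state) (i : 'I_n) (k : 'I_n) : bool :=
  agent_free s i && (alpha <= bval i (bags s k)).
Definition good_choice (s : state) (i k : 'I_n) : bool :=
  qualifies s i k &&
  (inN11 i || ~~ [exists i', qualifies s i' k && inN11 i']).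
Definition used (s : state) (g : nat) : bool := [exists k, g \in bags s k].

Definition assign (s : state) (k i : 'I_n) : state :=
  St (bags s) (fun k' => if k' == k then Some i else owner s k') (phase2 s) None.
Definition addgood (s : state) (k : 'I_n) (g : nat) : state :=
  St (fun k' => if k' == k then rcons (bags s k) g else bags s k')
     (owner s) (phase2 s) (cur s).

Inductive step : state -> state -> Prop :=
  | step_p1 s k i :
      ~~ phase2 s -> bag_free s k -> good_choice s i k -> step s (assign s k i)
  | step_p12 s :
      ~~ phase2 s -> ~~ [exists k, exists i, bag_free s k && qualifies s i k] ->
      step s (St (bags s) (owner s) true None)
  (* Phase 2: start processing a remaining bag (in arbitrary order) *)
  | step_pick s k :
      phase2 s -> cur s = None -> bag_free s k ->
      step s (St (bags s) (owner s) true (Some k))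
  | step_add s k g :
      phase2 s -> cur s = Some k -> ~~ [exists i, qualifies s i k] ->
      (2 * n < g <= m)%N -> ~~ used s g -> step s (addgood s k g)
  | step_asg s k i :
      phase2 s -> cur s = Some k -> good_choice s i k -> step s (assign s k i).

Inductive reachable : state -> Prop :=
  | reach_init : reachable init
  | reach_step s s' : reachable s -> step s s' -> reachable s'.

(* end of the algorithm: no further step possible (includes the case where
   a good must be added but none is left) *)
Definition final (s : state) : Prop := ~ exists s', step s s'.

End ApproxMMS1.

From HB Require Import structures.
From mathcomp Require Import all_boot all_order all_algebra.
From mathcomp Require Import zify lra.
Set Implicit Arguments. Unset Strict Implicit. Unset Printing Implicit Defensive.
Import Order.TTheory GRing.Theory Num.Theory.
Local Open Scope ring_scope.

(* If an agent i of N^2 is never served, the algorithm must stop in Phase 2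
   with no unused good left and a current bag that i values below alpha. Put
   b = alpha + v_i(2n+1). Goods are only added to bags that i values below
   alpha, so every bag is worth at most max(b, v_i(B_k)) to her and the current
   one less than b: the value n she gives to all goods is less than
   S = sum_k max(b, v_i(B_k)). But S <= n. The 2n most valuable goods, grouped
   by the bundles of i's normalized partition, can be re-paired into n pairs
   whose costs max(b, value of the pair) add up to at most n, and since
   max(b, _) is convex, the nested pairing {k, 2n-k+1} of the sorted values is
   the cheapest of all pairings. The same bound with b = 1 gives v_i(1) > 2/3
   on N^2, which with irreducibility keeps v_i(1) and b small enough. *)

Lemma has_size_gt (T : Type) k (gs : seq (seq T)) :
  (k * size gs < size (flatten gs))%N -> has (fun G => k < size G)%N gs.
Proof.
elim: gs => [|G gs IH] /=; first by rewrite muln0.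
by rewrite size_cat; case: (ltnP k (size G)) => //= hG h; apply: IH; lia.
Qed.

Lemma has_size_lt (T : Type) k (gs : seq (seq T)) :
  (size (flatten gs) < k * size gs)%N -> has (fun G => size G < k)%N gs.
Proof.
elim: gs => [|G gs IH] /=; first by rewrite muln0.
by rewrite size_cat; case: (ltnP (size G) k) => //= hG h; apply: IH; lia.
Qed.

Lemma has_size1 (T : eqType) (gs : seq (seq T)) :
  ~~ has (fun G => size G == 0)%N gs -> ~~ has (fun G => size G == 2)%N gs ->
  (size (flatten gs) < 3 * size gs)%N -> has (fun G => size G == 1)%N gs.
Proof.
move=> n0 n2 /has_size_lt /hasP [G Gin hG]; apply/hasP; exists G => //.
by move: (hasPn n0 G Gin) (hasPn n2 G Gin) hG => /=; lia.
Qed.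

Lemma has_perm_cons (T : eqType) (Q : pred T) s :
  has Q s -> exists x s', perm_eq s (x :: s') /\ Q x.
Proof. by case/hasP => x xs Qx; exists x, (rem x s); rewrite perm_to_rem. Qed.

Lemma subset_hasN (T : eqType) (Q : pred T) s1 s2 :
  {subset s1 <= s2} -> ~~ has Q s2 -> ~~ has Q s1.
Proof. by move=> sub /hasPn nQ; apply/hasPn => x /sub/nQ. Qed.

Lemma perm_flatten_classes (T : eqType) (I : finType) (f : T -> I) (s : seq T) :
  perm_eq (flatten [seq [seq x <- s | f x == k] | k <- enum I]) s.
Proof.
apply/permP => P; rewrite count_flatten -map_comp sumnE big_map big_enum /=.
rewrite (eq_bigr (fun k => \sum_(x <- s | P x && (f x == k)) 1)%N); last first.
  by move=> k _; rewrite count_filter -sum1_count.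
rewrite (exchange_big_dep P) => [|? ? _ /andP []] //=.
rewrite -sum1_count; apply: eq_bigr => x Px.
by rewrite (big_pred1 (f x)) // => k; rewrite Px eq_sym.
Qed.

Lemma ler_sum_support (I : eqType) (R : numDomainType) (s1 s2 : seq I) (P : pred I)
    (F : I -> R) :
  uniq s1 -> uniq s2 -> {in s2, forall j, 0 <= F j} ->
  {in s1, forall j, F j != 0 -> j \in s2} ->
  \sum_(j <- s1 | P j) F j <= \sum_(j <- s2 | P j) F j.
Proof.
move=> u1 u2 F0 sub.
have common : perm_eq [seq j <- s1 | j \in s2] [seq j <- s2 | j \in s1].
  by apply: uniq_perm; rewrite ?filter_uniq // => j; rewrite !mem_filter andbC.
rewrite (bigID (mem s2)) /= [X in _ + X]big1_seq ?addr0; last first.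
  by move=> j /andP [/andP [_ js2] js1]; apply/eqP; apply: contraNT js2 => /(sub j js1).
rewrite [X in _ <= X](bigID (mem s1)) /=; apply: ler_wpDr.
  by rewrite big_seq_cond sumr_ge0 // => j /andP [/F0].
rewrite (eq_bigl _ _ (fun j => andbC (P j) _)) -big_filter_cond (perm_big _ common).
by rewrite big_filter_cond (eq_bigl _ _ (fun j => andbC (P j) _)).
Qed.

Lemma le_of_sum_le_const (I : finType) (R : numDomainType) (F : I -> R) c k :
  (forall j, c <= F j) -> \sum_j F j <= c *+ #|I| -> F k <= c.
Proof.
move=> Fc hsum; rewrite -subr_le0; apply: le_trans (_ : \sum_j (F j - c) <= 0).
  by rewrite (bigD1 k) //= lerDl sumr_ge0 // => j _; rewrite subr_ge0.
by rewrite sumrB sumr_const subr_le0.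
Qed.

(** * Pairings and their cost *)

Section PairCost.
Variable R : realDomainType.
Implicit Types (b x y z u w : R) (ys : seq R) (M : seq (R * R)).

Definition pair_elems M : seq R := flatten [seq [:: e.1; e.2] | e <- M].

Definition pair_cost b M : R := \sum_(e <- M) Num.max b (e.1 + e.2).

Lemma pair_elems_cat M1 M2 : pair_elems (M1 ++ M2) = pair_elems M1 ++ pair_elems M2.
Proof. by rewrite /pair_elems map_cat flatten_cat. Qed.

Lemma size_pair_elems M : size (pair_elems M) = (2 * size M)%N.
Proof. by elim: M => //= e M ->; lia. Qed.

Lemma pair_cost_cons b u w M :
  pair_cost b ((u, w) :: M) = Num.max b (u + w) + pair_cost b M.
Proof. by rewrite /pair_cost big_cons. Qed.

Lemma pair_cost_cat b M1 M2 : pair_cost b (M1 ++ M2) = pair_cost b M1 + pair_cost b M2.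
Proof. by rewrite /pair_cost big_cat. Qed.

Lemma pair_elems_extract b x M : x \in pair_elems M -> exists u M',
  perm_eq (pair_elems M) (x :: u :: pair_elems M') /\
  pair_cost b M = Num.max b (x + u) + pair_cost b M'.
Proof.
elim: M => [|[e1 e2] M IH] // xin.
have : x \in [:: e1, e2 & pair_elems M] := xin.
rewrite !inE => /or3P [/eqP-> | /eqP-> | /IH [u [M' [hp hc]]]].
- by exists e2, M; rewrite pair_cost_cons.
- exists e1, M; rewrite pair_cost_cons (addrC e1); split => //.
  by rewrite (perm_catCA [:: e1] [:: e2]).
- exists u, ((e1, e2) :: M'); rewrite !pair_cost_cons hc addrCA; split => //.
  have swap : perm_eq [:: e1, e2, x, u & pair_elems M'] [:: x, u, e1, e2 & pair_elems M'].
    exact/permPl/(perm_catCA [:: e1; e2] [:: x; u]).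
  by apply: perm_trans swap; rewrite !perm_cons.
Qed.

Definition nested_cost b p ys : R :=
  \sum_(k < p) Num.max b (ys`_k + ys`_(2 * p - k.+1)).

Lemma nested_cost_cons_rcons b p y mid z : size mid = (2 * p)%N ->
  nested_cost b p.+1 (y :: rcons mid z) = Num.max b (y + z) + nested_cost b p mid.
Proof.
move=> hs; rewrite /nested_cost big_ord_recl /=.
have -> : (2 * p.+1 - 1 = (2 * p).+1)%N by lia.
rewrite /= nth_rcons hs ltnn eqxx; congr (_ + _).
apply: eq_bigr => k _ /=; have hk := ltn_ord k.
have -> : (2 * p.+1 - k.+2 = (2 * p - k.+1).+1)%N by lia.
by rewrite /= !nth_rcons hs !ifT //; lia.
Qed.

(* [Num.max b] is convex, and (y + u, z + w) spreads the sum y + z + u + w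
   wider than (y + z, u + w). *)
Lemma max_exchange b y z u w : z <= u <= y -> z <= w <= y ->
  Num.max b (y + z) + Num.max b (u + w) <= Num.max b (y + u) + Num.max b (z + w).
Proof.
move=> /andP [h1 h2] /andP [h3 h4].
by case: (leP b (y + z)); case: (leP b (u + w)); case: (leP b (y + u));
  case: (leP b (z + w)); lra.
Qed.

Lemma sorted_ge_cons_rcons y mid z : sorted >=%R (y :: rcons mid z) ->
  sorted >=%R mid /\ {in y :: rcons mid z, forall w, z <= w <= y}.
Proof.
have ge_trans : transitive (>=%R : rel R) by exact: rev_trans le_trans.
move=> hsort; rewrite sorted_pairwise //.
rewrite sorted_pairwise // pairwise_cons -cats1 pairwise_cat all_cat /= !andbT in hsort.
case/and3P: hsort => /andP [/allP ymid zy] /allrelP midz ->; split => // w.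
rewrite inE mem_rcons inE => /or3P [/eqP-> | /eqP-> | wmid]; rewrite ?lexx ?zy //.
by apply/andP; split; [exact: (midz w z wmid (mem_head _ _)) | exact: ymid].
Qed.

Lemma nested_cost_le_pair_cost b p ys M : size ys = (2 * p)%N ->
  sorted >=%R ys -> perm_eq (pair_elems M) ys -> nested_cost b p ys <= pair_cost b M.
Proof.
elim: p ys M => [|p IH] ys M hs hsort hp.
  move: (perm_size hp); rewrite size_pair_elems hs => /eqP; rewrite muln_eq0 /=.
  by move/eqP/size0nil->; rewrite /nested_cost big_ord0 /pair_cost big_nil.
case: ys hs hsort hp => [|y ys] //; case/lastP: ys => [|mid z] hs.
  by move: hs => /=; lia.
rewrite /= size_rcons in hs; have {}hs : size mid = (2 * p)%N by lia.
move=> /sorted_ge_cons_rcons [hmid bounds] hp; rewrite nested_cost_cons_rcons //.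
have inM w : w \in pair_elems M -> z <= w <= y by rewrite (perm_mem hp) => /bounds.
have /(pair_elems_extract b) [u [M' [hpu ->]]] : y \in pair_elems M.
  by rewrite (perm_mem hp) mem_head.
have hzu : perm_eq (u :: pair_elems M') (z :: mid).
  by move: hp; rewrite (permPl hpu) perm_cons perm_sym perm_rcons perm_sym.
case: (eqVneq z u) => [ezu | nzu].
  by subst u; rewrite lerD2l; apply: IH => //; rewrite -(perm_cons z).
have /(pair_elems_extract b) [w [M'' [hpw ->]]] : z \in pair_elems M'.
  by move: (mem_head z mid); rewrite -(perm_mem hzu) inE (negbTE nzu).
have hrest : perm_eq (pair_elems ((u, w) :: M'')) mid.
  rewrite -(perm_cons z); apply: perm_trans hzu.
  have swap : perm_eq [:: z, u, w & pair_elems M''] [:: u, z, w & pair_elems M''].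
    exact/permPl/(perm_catCA [:: z] [:: u]).
  by apply: perm_trans swap _; rewrite perm_cons perm_sym.
have uM : u \in pair_elems M by rewrite (perm_mem hpu) !inE eqxx orbT.
have wM : w \in pair_elems M.
  by rewrite (perm_mem hpu) !inE (perm_mem hpw) !inE eqxx !orbT.
have := IH mid _ hs hmid hrest; rewrite pair_cost_cons.
have := max_exchange b (inM u uM) (inM w wM); lra.
Qed.

End PairCost.

(** * Regrouping bundles into cheap pairs *)

(* [a] bounds the values of the goods and [b] is the cost threshold; each
   inequality pays for one case of the regrouping. *)
Definition regroup_bounds (R : realFieldType) (a b : R) : Prop :=
  [/\ a <= 4/5, b <= 1, a + 1/3 + b <= 2, 2 * a + 7/12 + b <= 3 & a + 1/4 + 2 * b <= 3].

Section Regrouping.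
Variables (R : realFieldType) (a b : R).
Hypothesis hab : regroup_bounds a b.
Implicit Types (g r u w : R) (G : seq R) (gs : seq (seq R)) (P : seq (R * R)).

Definition bundle_ok G : bool :=
  (\sum_(x <- G) x <= 1) && all (fun x => 0 <= x <= a) G.

Definition reducible gs := exists P gs',
  [/\ perm_eq (flatten gs) (pair_elems P ++ flatten gs'), size gs = (size P + size gs')%N,
      (0 < size P)%N, all bundle_ok gs' & pair_cost b P <= (size P)%:R].

Lemma pick_bundle (Q : pred (seq R)) gs : all bundle_ok gs -> has Q gs ->
  exists G gs1, [/\ Q G, all bundle_ok (G :: gs1), {subset gs1 <= gs},
    size gs = (size gs1).+1 & perm_eq (flatten gs) (G ++ flatten gs1)].
Proof.
move=> hok /has_perm_cons [G [gs1 [hp QG]]]; exists G, gs1; split => //.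
- by rewrite -(perm_all _ hp).
- by move=> H H1; rewrite (perm_mem hp) inE H1 orbT.
- exact: perm_size hp.
- exact: perm_flatten hp.
Qed.

Lemma bundle_min G : bundle_ok G -> (0 < size G)%N -> exists r G',
  [/\ perm_eq G (r :: G'), bundle_ok G', 0 <= r <= a,
      forall k, (k <= size G)%N -> k%:R * r <= \sum_(x <- G) x
    & \sum_(x <- G) x = r + \sum_(x <- G') x].
Proof.
move=> /andP [hsum hall]; have := perm_sort <=%R G.
have := sort_sorted (@le_total _ R) G; case: (sort _ G) => [_ /permPl/perm_size <- // |].
move=> r G' /= /(order_path_min le_trans) /allP rmin /permPl; rewrite perm_sym => hp _.
have sumG : \sum_(x <- G) x = r + \sum_(x <- G') x by rewrite (perm_big _ hp) big_cons.
move: hall; rewrite (perm_all _ hp) /= => /andP [hr hall'].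
have /andP [hr0 _] := hr.
have sumG'0 : 0 <= \sum_(x <- G') x.
  by rewrite big_seq sumr_ge0 // => x /(allP hall') /andP [].
exists r, G'; split => //.
  by rewrite /bundle_ok hall' andbT; move: hsum; rewrite sumG => ?; lra.
move=> k hk; apply: le_trans (_ : (size G)%:R * r <= _).
  by rewrite ler_wpM2r // ler_nat.
rewrite sumG (perm_size hp) /= -addn1 natrD mulrDl mul1r addrC lerD2l.
have -> : (size G')%:R * r = \sum_(x <- G') r.
  by rewrite big_const_seq count_predT iter_addr addr0 mulr_natl.
by rewrite big_seq [X in _ <= X]big_seq; apply: ler_sum.
Qed.

Lemma take_min_of_big gs : all bundle_ok gs -> (2 * size gs < size (flatten gs))%N ->
  exists r gs', [/\ perm_eq (flatten gs) (r :: flatten gs'), size gs' = size gs,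
    all bundle_ok gs', 0 <= r & 3 * r <= 1].
Proof.
move=> hok /has_size_gt /(pick_bundle hok) [G [gs1 [hG /andP [okG hok1] _ hsz hp]]].
have [|r [G' [hpG okG' /andP [hr0 _] hrG _]]] := bundle_min okG; first by lia.
exists r, (G' :: gs1); split => //=.
- by apply: perm_trans hp _; rewrite -cat_cons perm_cat2r.
- by apply/andP.
- exact: le_trans (hrG 3 hG) (andP okG).1.
Qed.

Lemma pair_cost1_le1 u w : u + w <= 1 -> pair_cost b [:: (u, w)] <= 1.
Proof. by case: hab => _ hb *; rewrite /pair_cost big_seq1 ge_max hb. Qed.

Lemma heavy_pair_cost3 g r u w : g <= a -> 3 * r <= 1 -> r + (u + w) <= 1 ->
  1 < g + r -> pair_cost b [:: (g, r); (u, w)] <= 2%:R.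
Proof.
move=> *; case: hab => *; rewrite /pair_cost !big_cons big_nil /=.
by case: (leP b (g + r)) => ?; case: (leP b (u + w)) => ?; lra.
Qed.

Lemma heavy_pair_cost4 g g2 r r2 u w : g <= a -> g2 <= a -> 0 <= r -> 0 <= r2 ->
  4 * r <= r + (r2 + (u + w)) -> 3 * r2 <= r2 + (u + w) -> r + (r2 + (u + w)) <= 1 ->
  1 < g + r -> pair_cost b [:: (g, r); (g2, r2); (u, w)] <= 3%:R.
Proof.
move=> *; case: hab => *; rewrite /pair_cost !big_cons big_nil /=.
by case: (leP b (g + r)) => ?; case: (leP b (g2 + r2)) => ?; case: (leP b (u + w)) => ?; lra.
Qed.

Lemma reducible_pair gs : all bundle_ok gs -> has (fun G => size G == 2)%N gs ->
  reducible gs.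
Proof.
move=> hok /(pick_bundle hok) [G [gs1 [hG /andP [okG hok1] _ hsz hp]]].
case: G hG okG hp => [|u [|w []]] // _ /andP [huw _] hp.
exists [:: (u, w)], gs1; split => //.
by apply: pair_cost1_le1; move: huw; rewrite !big_cons big_nil addr0.
Qed.

Lemma reducible_empty gs : all bundle_ok gs -> size (flatten gs) = (2 * size gs)%N ->
  has (fun G => size G == 0)%N gs -> reducible gs.
Proof.
move=> hok hsz /(pick_bundle hok) [G [gs1 [/eqP/size0nil-> /andP [_ hok1] _ hsz1 hp]]].
have [|r [gs2 [hp2 hsz2 hok2 _ hr]]] := take_min_of_big hok1.
  by move: (perm_size hp) => /=; lia.
have [|r2 [gs3 [hp3 hsz3 hok3 _ hr2]]] := take_min_of_big hok2.
  by move: (perm_size hp) (perm_size hp2) => /=; lia.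
exists [:: (r, r2)], gs3; split => //.
- by apply: perm_trans hp _; apply: perm_trans hp2 _; rewrite /= perm_cons.
- by rewrite hsz1 -hsz2 -hsz3.
- by case: hab => *; apply: pair_cost1_le1; lra.
Qed.

Lemma reducible_heavy4 gs gs2 g r G' :
  perm_eq (flatten gs) ([:: g; r] ++ G' ++ flatten gs2) ->
  size gs = (size gs2).+2 -> size (flatten gs) = (2 * size gs)%N -> all bundle_ok gs2 ->
  ~~ has (fun G => size G == 0)%N gs2 -> ~~ has (fun G => size G == 2)%N gs2 ->
  bundle_ok G' -> size G' = 3%N -> g <= a -> 0 <= r ->
  4 * r <= r + \sum_(x <- G') x -> r + \sum_(x <- G') x <= 1 -> 1 < g + r -> reducible gs.
Proof.
move=> hperm hsz2 hsz hok2 n0 n2 okG' hsG' hga hr0 hr4 hr1 hgr.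
have [|r2 [G'' [hpG' okG'' /andP [hr20 _] hrG' sumG']]] := bundle_min okG'.
  by rewrite hsG'.
have := perm_size hpG'; rewrite hsG'.
case: G'' okG'' hpG' sumG' => [|u [|w []]] // _ hpG' sumG' _.
have /(pick_bundle hok2) [G2 [gs3 [hG2 /andP [okG2 hok3] _ hsz3 hp3]]] :
    has (fun G => size G == 1)%N gs2.
  apply: has_size1 => //.
  by move: (perm_size hperm) hsz hsz2; rewrite /= size_cat hsG'; clear; lia.
case: G2 hG2 okG2 hp3 => [|g2 []] // _ /andP [_ /andP [/andP [_ hg2a] _]] hp3.
exists [:: (g, r); (g2, r2); (u, w)], gs3; split => //.
- apply: perm_trans hperm _; rewrite /= !perm_cons.
  apply: perm_trans (perm_cat hpG' hp3) _.
  exact/permPl/(perm_catCA [:: r2; u; w] [:: g2]).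
- by rewrite hsz2 hsz3.
rewrite !big_cons big_nil addr0 in sumG'.
by apply: heavy_pair_cost4; rewrite -?sumG' //; apply: hrG'; rewrite hsG'.
Qed.

Lemma reducible_singleton gs : all bundle_ok gs -> size (flatten gs) = (2 * size gs)%N ->
  ~~ has (fun G => size G == 0)%N gs -> ~~ has (fun G => size G == 2)%N gs ->
  (0 < size gs)%N -> reducible gs.
Proof.
move=> hok hsz n0 n2 hpos.
have /(pick_bundle hok) [G1 [gs1 [hG1 /andP [okG1 hok1] sub1 hsz1 hp1]]] :
    has (fun G => size G == 1)%N gs.
  by apply: has_size1 => //; rewrite hsz ltn_mul2r hpos.
case: G1 hG1 okG1 hp1 => [|g []] // _ /andP [_ /andP [/andP [_ hga] _]] hp1.
have /(pick_bundle hok1) [G [gs2 [hG /andP [okG hok2] sub2 hsz2 hp2]]] :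
    has (fun G => 2 < size G)%N gs1.
  by apply: has_size_gt; move: (perm_size hp1) hsz hsz1 => /=; clear; lia.
have [|r [G' [hpG okG' /andP [hr0 _] hrG sumG]]] := bundle_min okG.
  by case: (size G) hG.
have hperm : perm_eq (flatten gs) ([:: g; r] ++ G' ++ flatten gs2).
  apply: perm_trans hp1 _; rewrite /= perm_cons; apply: perm_trans hp2 _.
  by rewrite -cat_cons perm_cat2r.
have sumG1 := (andP okG).1.
case: (lerP (g + r) 1) => hgr.
  exists [:: (g, r)], (G' :: gs2); split => //=; first by rewrite hsz1 hsz2.
  - by rewrite okG'.
  - exact: pair_cost1_le1.
(* As g <= 4/5 and r <= 1/|G|, only |G| = 3 or 4 allows g + r > 1. *)
have hsG : (size G = 3 \/ size G = 4)%N.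
  suff : (size G < 5)%N by move: hG; clear; lia.
  rewrite ltnNge; apply/negP => /hrG/le_trans/(_ sumG1) h5.
  by case: hab => ha *; move: ha hga hgr h5; clear; lra.
have hsG' := perm_size hpG; rewrite sumG in hrG sumG1.
case: hsG => hsG; rewrite hsG in hsG' hrG.
  case: G' {hpG} hsG' okG' sumG hrG sumG1 hperm => [|u [|w []]] // _ _ _ hrG sumG1 hperm.
  exists [:: (g, r); (u, w)], gs2; split => //; first by rewrite hsz1 hsz2.
  apply: heavy_pair_cost3 => //; last by rewrite !big_cons big_nil addr0 in sumG1.
  exact: le_trans (hrG 3 _) sumG1.
have sub12 : {subset gs2 <= gs} by move=> H /sub2/sub1.
apply: (reducible_heavy4 hperm) => //; first by rewrite hsz1 hsz2.
- exact: subset_hasN sub12 n0.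
- exact: subset_hasN sub12 n2.
- by case: hsG'.
- exact: hrG.
Qed.

Lemma reducible_nonempty gs : all bundle_ok gs -> size (flatten gs) = (2 * size gs)%N ->
  (0 < size gs)%N -> reducible gs.
Proof.
move=> hok hsz hpos.
have [|n2] := boolP (has (fun G => size G == 2)%N gs); first exact: reducible_pair.
have [|n0] := boolP (has (fun G => size G == 0)%N gs); first exact: reducible_empty.
exact: reducible_singleton.
Qed.

Lemma regroup_into_pairs gs : all bundle_ok gs -> size (flatten gs) = (2 * size gs)%N ->
  exists M, perm_eq (pair_elems M) (flatten gs) /\ pair_cost b M <= (size gs)%:R.
Proof.
move hp : (size gs) => p; elim/ltn_ind: p gs hp => p IH gs hp hok hsz; subst p.
have [/size0nil-> | hpos] := posnP (size gs).
  by exists [::]; rewrite /pair_cost big_nil.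
have [P [gs' [hperm hsize hP hok' hcost]]] := reducible_nonempty hok hsz hpos.
have [||M' [hM' hc']] := IH (size gs') _ gs' erefl hok'.
- by rewrite hsize -add1n leq_add2r.
- move: (perm_size hperm).
  by rewrite hsz size_cat size_pair_elems hsize mulnDr => /addnI->.
exists (P ++ M'); split; last by rewrite pair_cost_cat hsize natrD lerD.
by rewrite pair_elems_cat perm_sym (perm_trans hperm) // perm_cat2l perm_sym.
Qed.

End Regrouping.

Section Valuations.
Variables (R : realFieldType) (n m : nat) (v : 'I_n -> nat -> R).
Hypotheses (hv : valuations_ok m v) (ho : ordered m v) (hn : normalized m v).

Lemma val_ge0 i j : 0 <= v i j.
Proof. by case: hv. Qed.

Lemma val_dummy i j : (m < j)%N -> v i j = 0.
Proof. by case: hv => _; apply. Qed.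

Lemma val_le i j1 j2 : (0 < j1 <= j2)%N -> v i j2 <= v i j1.
Proof.
case: j1 j2 => [|j1] [|j2] //=; rewrite ltnS.
apply: (homo_leq (f := fun j => v i j.+1) (r := fun x y => y <= x)) => [x | y x z | j].
- exact: lexx.
- by move=> h1 h2; apply: le_trans h2 h1.
- by case: (ltnP j.+1 m) => hjm; [apply: ho | rewrite val_dummy ?val_ge0].
Qed.

Lemma sum_values i : \sum_(1 <= j < m.+1) v i j = n%:R.
Proof.
have [f hf] := hn i.
rewrite -[n in RHS]card_ord -sumr_const -(eq_bigr _ (fun k _ => hf k)).
rewrite (exchange_big_dep xpredT) //=; apply: eq_bigr => j _.
by rewrite (big_pred1 (f j)) // => k /=; rewrite andbT eq_sym.
Qed.

Lemma top_bundles_ok i a (f : nat -> 'I_n) : v i 1 <= a ->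
  (forall k, \sum_(1 <= j < m.+1 | f j == k) v i j = 1) ->
  all (bundle_ok a) [seq [seq v i j | j <- iota 1 (2 * n) & f j == k] | k <- enum 'I_n].
Proof.
move=> ha hf; apply/allP => G /mapP [k _ ->]; apply/andP; split.
  rewrite big_map big_filter -(hf k) /index_iota subn1 /=.
  apply: ler_sum_support; rewrite ?iota_uniq //; first by move=> j _; apply: val_ge0.
  move=> j; rewrite !mem_iota => /andP [-> _]; apply: contraR.
  by rewrite -leqNgt add1n => /val_dummy ->.
apply/allP => x /mapP [j]; rewrite mem_filter mem_iota => /andP [_ /andP [hj _]] ->.
by rewrite val_ge0 (le_trans _ ha) // val_le.
Qed.

Lemma sum_max_bagB_le i a b : v i 1 <= a -> regroup_bounds a b ->
  \sum_(k < n) Num.max b (bval v i (bagB k)) <= n%:R.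
Proof.
move=> ha hab; have [f hf] := hn i.
pose ys := [seq v i j | j <- iota 1 (2 * n)].
pose gs := [seq [seq v i j | j <- iota 1 (2 * n) & f j == k] | k <- enum 'I_n].
have hperm : perm_eq (flatten gs) ys.
  by rewrite /gs (map_comp (map (v i))) -map_flatten perm_map // perm_flatten_classes.
have hsize : size gs = n by rewrite size_map size_enum_ord.
have hsys : size ys = (2 * n)%N by rewrite size_map size_iota.
have hsz : size (flatten gs) = (2 * size gs)%N by rewrite (perm_size hperm) hsys hsize.
have [M [hpM hcM]] := regroup_into_pairs hab (top_bundles_ok ha hf) hsz.
have hsort : sorted >=%R ys.
  rewrite sorted_map; apply: (sub_in_sorted _ (allss _) (iota_ltn_sorted 1 (2 * n))).
  move=> j1 j2; rewrite mem_iota => /andP [hj1 _] _ /= hj12.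
  by apply: val_le; rewrite hj1 ltnW.
have -> : \sum_(k < n) Num.max b (bval v i (bagB k)) = nested_cost b n ys.
  apply: eq_bigr => k _; have hk := ltn_ord k.
  rewrite /bval /bagB !big_cons big_nil addr0 !(nth_map 0%N) ?nth_iota ?size_iota; try lia.
  by congr (Num.max b (v i _ + v i _)); lia.
apply: le_trans (nested_cost_le_pair_cost b hsys hsort (perm_trans hpM hperm)) _.
by rewrite -hsize.
Qed.

Lemma N2_top_good_gt i : i \in N2 v -> 2/3 < v i 1.
Proof.
rewrite inE ltNge; apply: contra => h; apply/forallP => k.
have bounds : regroup_bounds (2/3 : R) 1 by split; lra.
apply: le_trans (_ : _ <= Num.max 1 (bval v i (bagB k))) _.
  by rewrite le_max lexx orbT.
apply: (le_of_sum_le_const (F := fun j => Num.max 1 (bval v i (bagB j)))) => [j |].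
  by rewrite le_max lexx.
by rewrite card_ord; apply: sum_max_bagB_le bounds.
Qed.

End Valuations.

(** * The algorithm *)

Section Goods.
Variables (R : realFieldType) (n : nat) (v : 'I_n -> nat -> R).
Implicit Types (s : state n) (i k : 'I_n).

Definition goods s : seq nat := flatten [seq bags s k | k <- enum 'I_n].

Lemma usedE s g : used s g = (g \in goods s).
Proof.
apply/existsP/flatten_mapP => [[k gk] | [k _ gk]]; last by exists k.
by exists k; rewrite ?mem_enum.
Qed.

Lemma sum_bags s i : \sum_(k < n) bval v i (bags s k) = \sum_(g <- goods s) v i g.
Proof. by rewrite /goods big_flatten big_map big_enum. Qed.

Lemma perm_goods_addgood s k g : perm_eq (goods (addgood s k g)) (g :: goods s).
Proof.
rewrite /goods /addgood /=.
elim: (enum 'I_n) (enum_uniq 'I_n) (mem_enum 'I_n k) => [|k' e IH] //= /andP [k'e ue].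
rewrite inE; case: (eqVneq k' k) => [ek _ | nk /= ke].
  subst k'; rewrite -cats1 -catA (eq_in_map _ (fun k'' => bags s k'') e).1 /=.
    exact/permPl/(perm_catCA (bags s k) [:: g]).
  by move=> k'' k''e; rewrite ifN //; apply: contraNneq k'e => <-.
apply: perm_trans (_ : perm_eq _ (bags s k' ++ g :: _)) _.
  by rewrite perm_cat2l; exact: IH.
exact/permPl/(perm_catCA (bags s k') [:: g]).
Qed.

Lemma goods_init g : (g \in goods (init n)) = (0 < g <= 2 * n)%N.
Proof.
apply/flatten_mapP/idP => [[k _] | /andP [hg0 hg2]].
  by rewrite /= /bagB !inE => /orP [] /eqP ->; have := ltn_ord k; lia.
case: (leqP g n) => hgn.
  have hk : (g.-1 < n)%N by lia.
  by exists (Ordinal hk); rewrite ?mem_enum //= /bagB inE prednK ?eqxx.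
have hk : (2 * n - g < n)%N by lia.
by exists (Ordinal hk); rewrite ?mem_enum //= /bagB !inE subKn ?eqxx ?orbT //; lia.
Qed.

Lemma uniq_goods_init : uniq (goods (init n)).
Proof.
apply: (leq_size_uniq (iota_uniq 1 (2 * n))) => [g|].
  by rewrite mem_iota goods_init add1n ltnS.
rewrite size_iota /goods size_flatten /shape -map_comp sumnE big_map big_enum /=.
by rewrite (eq_bigr (fun=> 2%N)) // sum_nat_const card_ord mulnC.
Qed.

End Goods.

Section Invariant.
Variables (R : realFieldType) (n m : nat) (v : 'I_n -> nat -> R) (delta : R).
Hypotheses (hv : valuations_ok m v) (ho : ordered m v).
Implicit Types (s : state n) (i k : 'I_n).

Record invariant s : Prop := Invariant {
  inv_cur_free : forall k, cur s = Some k -> bag_free s k;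
  inv_owner_val : forall k i, owner s k = Some i -> alpha delta <= bval v i (bags s k);
  inv_owner_inj : forall k k' i, owner s k = Some i -> owner s k' = Some i -> k = k';
  inv_goods_uniq : uniq (goods s);
  inv_goods_low : forall g, (0 < g <= 2 * n)%N -> g \in goods s;
  inv_free_bags : forall i, agent_free s i -> forall k,
    bval v i (bags s k) <= Num.max (alpha delta + v i (2 * n).+1) (bval v i (bagB k)) }.

Lemma invariant_init : invariant (init n).
Proof.
split=> //=; [exact: uniq_goods_init | by move=> g; rewrite goods_init |].
by move=> i _ k; rewrite le_max lexx orbT.
Qed.

Lemma agent_free_assign s k i i' :
  bag_free s k -> agent_free (assign s k i) i' -> agent_free s i'.
Proof.
move=> /eqP hk /forallP hf; apply/forallP => k'; have := hf k'; rewrite /assign /=.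
by case: (eqVneq k' k) => [->|] //; rewrite hk.
Qed.

Lemma invariant_assign s k i : invariant s -> bag_free s k -> good_choice v delta s i k ->
  invariant (assign s k i).
Proof.
case=> _ hval hinj huniq hlow hfree hk /andP [/andP [/forallP hi hq] _].
split=> //= [k' j | k1 k2 j | j /(agent_free_assign hk)]; last exact: hfree.
  by case: (eqVneq k' k) => [-> [<-] | _]; [ | apply: hval].
case: (eqVneq k1 k) => [-> | _]; case: (eqVneq k2 k) => [-> | _] //.
- by move=> [<-] h2; have /eqP := hi k2; rewrite h2.
- by move=> h1 [ej]; subst j; have /eqP := hi k1; rewrite h1.
- exact: hinj.
Qed.

(* A good is only added to a bag that no free agent values at [alpha delta],
   and it is worth at most v_i(2n+1) to any agent i. *)
Lemma invariant_addgood s k g : invariant s -> cur s = Some k ->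
  ~~ [exists i, qualifies v delta s i k] -> (2 * n < g <= m)%N -> ~~ used s g ->
  invariant (addgood s k g).
Proof.
case=> hcur hval hinj huniq hlow hfree hk nq /andP [hg _] hu.
have /eqP hkfree := hcur k hk.
have hperm := perm_goods_addgood s k g.
split=> //= [k' j | | g' hg' | i /= hi k'].
- by case: (eqVneq k' k) => [-> | _]; [rewrite hkfree | apply: hval].
- by rewrite (perm_uniq hperm) /= huniq andbT -usedE.
- by rewrite (perm_mem hperm) inE hlow ?orbT.
case: (eqVneq k' k) => [-> | _]; last exact: hfree.
have hlt : bval v i (bags s k) < alpha delta.
  rewrite ltNge; apply: contra nq => hle; apply/existsP; exists i.
  by rewrite /qualifies (hi : agent_free s i) hle.
have hvg : v i g <= v i (2 * n).+1 by apply: (val_le hv ho); rewrite hg.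
rewrite /bval -cats1 big_cat big_seq1 le_max; apply/orP; left.
by rewrite lerD // ltW.
Qed.

Lemma invariant_reachable s : reachable m v delta s -> invariant s.
Proof.
elim=> [|s0 s1 _ inv hstep]; first exact: invariant_init.
case: hstep inv => {s0 s1}
  [t k i _ hk hc | t _ _ | t k _ _ hk | t k g _ hc hnq hg hu | t k i _ hc hc'] inv.
- exact: invariant_assign.
- by case: inv; split.
- by case: inv; split => //= k' [<-].
- exact: invariant_addgood.
- by apply: invariant_assign => //; apply: inv_cur_free inv _ hc.
Qed.

End Invariant.

Section Progress.
Variables (R : realFieldType) (n m : nat) (v : 'I_n -> nat -> R) (delta : R).
Hypotheses (hv : valuations_ok m v) (ho : ordered m v) (hn : normalized m v)
  (hirr : irreducible v (alpha delta)) (hd0 : 0 <= delta) (hd1 : delta <= 11 / 1000).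
Implicit Types (s : state n) (i k : 'I_n).

Lemma exists_good_choice s k : [exists i, qualifies v delta s i k] ->
  exists i, good_choice v delta s i k.
Proof.
case/existsP => i hq; rewrite /good_choice.
have [/existsP [i' /andP [hq' hi']] | _] :=
  boolP [exists i', qualifies v delta s i' k && inN11 v delta i'].
  by exists i'; rewrite hq' hi'.
by exists i; rewrite hq orbT.
Qed.

Lemma N2_regroup_bounds i : i \in N2 v ->
  regroup_bounds (v i 1) (alpha delta + v i (2 * n).+1).
Proof.
move=> hi; have := N2_top_good_gt hv ho hn hi; have := val_ge0 hv i (2 * n).+1.
have [h1 _ _ h4] := hirr i; move: h4 h1 hd0 hd1.
by rewrite /bval /alpha !big_cons big_nil addr0 => *; split; lra.
Qed.

Lemma N2_not_stuck s k i : invariant v delta s -> agent_free s i -> i \in N2 v ->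
  ~~ qualifies v delta s i k -> ~ (forall g, (2 * n < g <= m)%N -> used s g).
Proof.
move=> inv hfree hi nq hall.
pose b := alpha delta + v i (2 * n).+1.
have hk : bval v i (bags s k) < alpha delta.
  by rewrite ltNge; move: nq; rewrite /qualifies hfree.
have hn_le : n%:R <= \sum_(g <- goods s) v i g.
  rewrite -(sum_values hn i) /index_iota subn1 /=.
  apply: ler_sum_support; rewrite ?iota_uniq ?(inv_goods_uniq inv) //.
    by move=> g _; apply: (val_ge0 hv).
  move=> g; rewrite mem_iota => /andP [hg1 hgm] _.
  case: (leqP g (2 * n)) => hg2; first by apply: (inv_goods_low inv); rewrite hg1.
  by rewrite -usedE; apply: hall; rewrite hg2 -ltnS -add1n.
have hbags : \sum_(k' < n) bval v i (bags s k') <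
             \sum_(k' < n) Num.max b (bval v i (bagB k')).
  rewrite (bigD1 k) // [X in _ < X](bigD1 k) //=; apply: ltr_leD.
    by apply: (lt_le_trans hk); rewrite le_max lerDl (val_ge0 hv).
  by apply: ler_sum => k' _; apply: (inv_free_bags inv).
have := sum_max_bagB_le hv ho hn (lexx _) (N2_regroup_bounds hi).
by rewrite -/b => /(lt_le_trans hbags); rewrite sum_bags ltNge hn_le.
Qed.

Lemma all_bags_owned s : invariant v delta s -> ~~ [exists k, bag_free s k] ->
  forall i, ~~ agent_free s i.
Proof.
move=> inv /existsPn owned i.
have owner_of k : {j | owner s k = Some j}.
  by case e: (owner s k) => [j|]; [exists j | have := owned k; rewrite /bag_free e].
have inj : injective (fun k => sval (owner_of k)).
  move=> k1 k2 e; have h2 := svalP (owner_of k2); rewrite /= -e in h2.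
  by apply: (inv_owner_inj inv _ h2); case: (owner_of k1).
have /codomP [k ->] := inj_card_onto inj (leqnn _) i.
by case: (owner_of k) => j /= hj; apply/forallPn; exists k; rewrite hj eqxx.
Qed.

Lemma step_exists s i : invariant v delta s -> agent_free s i -> i \in N2 v ->
  exists s', step m v delta s s'.
Proof.
move=> inv hfree hi; case hph : (phase2 s); last first.
  have [/existsP [k /existsP [j /andP [hk hq]]] | none] :=
    boolP [exists k, exists j, bag_free s k && qualifies v delta s j k].
    have [j' hj'] : exists j', good_choice v delta s j' k.
      by apply: exists_good_choice; apply/existsP; exists j.
    by exists (assign s k j'); apply: step_p1; rewrite ?hph.
  by exists (St (bags s) (owner s) true None); apply: step_p12; rewrite ?hph.
case hc : (cur s) => [k|].
  have [/exists_good_choice [j hj] | nq] := boolP [exists j, qualifies v delta s j k].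
    by exists (assign s k j); apply: step_asg.
  have [/existsP [g /andP [hg hu]] | nfree] :=
    boolP [exists g : 'I_m.+1, (2 * n < g)%N && ~~ used s g].
    by exists (addgood s k g); apply: step_add => //; rewrite hg -ltnS ltn_ord.
  exfalso; apply: (N2_not_stuck inv hfree hi (k := k)).
    by apply: contra nq => hq; apply/existsP; exists i.
  move=> g /andP [hg hgm]; apply: contraNT nfree => hu; apply/existsP.
  by exists (Ordinal (hgm : g < m.+1)%N); rewrite /= hg.
have [/existsP [k hk] | owned] := boolP [exists k, bag_free s k].
  by exists (St (bags s) (owner s) true (Some k)); apply: step_pick.
by have := all_bags_owned inv owned i; rewrite hfree.
Qed.

End Progress.

Theorem lemma28 (R : realFieldType) (n m : nat) (v : 'I_n -> nat -> R) (delta : R) :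
  0 <= delta -> delta <= 11 / 1000 ->
  valuations_ok m v ->
  ONI m v delta ->
  (#|N11 v delta|%:R <= n%:R * (1/4 - delta) / (1/4 + delta / 3)) ->
  forall s : state n, reachable m v delta s -> final m v delta s ->
  forall i, i \in N2 v ->
    exists k, owner s k = Some i /\ alpha delta <= bval v i (bags s k).
Proof.
move=> hd0 hd1 hv [ho hn hirr] _ s hr hfin i hi.
have inv := invariant_reachable hv ho hr.
case: (boolP (agent_free s i)) => [hfree | /forallPn [k /negPn /eqP hk]].
  by case: hfin; apply: (step_exists hv ho hn hirr hd0 hd1 inv hfree hi).
by exists k; split => //; apply: (inv_owner_val inv hk).
Qed.
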